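(* Let $q\geq 3$ be an odd prime power and $m\geq 2$. Then the second largest odd coset leader modulo $q^m-1$ is $$\delta_2=(q-1)q^{m-1}-q^{\lfloor\frac{2m-1}{3}\rfloor}-q^{\lfloor\frac{m-1}{3}\rfloor}-1.$$
   Context: The $q$-cyclotomic coset of $i$ modulo $q^m-1$ is $\{i,iq,iq^2,\ldots\}\bmod(q^m-1)$; its smallest element is its coset leader. An odd coset leader is a coset leader that is an odd integer. *)

From mathcomp Require Import all_boot.

(* The q-cyclotomic coset of i modulo n = q^m - 1 is {i * q^j mod n | j : nat}. *)
Definition coset_leader (q m i : nat) : Prop :=
  i < q ^ m - 1 /\ forall j : nat, i <= (i * q ^ j) %% (q ^ m - 1).

Definition odd_coset_leader (q m i : nat) : Prop :=
  odd i /\ coset_leader q m i.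

Definition prime_power (q : nat) : Prop :=
  exists p k : nat, prime p /\ 0 < k /\ q = p ^ k.

Definition second_largest_odd_coset_leader (q m d : nat) : Prop :=
  odd_coset_leader q m d /\
  exists d1 : nat, d < d1 /\ odd_coset_leader q m d1 /\
    forall x : nat, odd_coset_leader q m x -> d < x -> x = d1.

From mathcomp Require Import all_boot zify.

(* Put y = q^m - 1 - x. Multiplication by q modulo q^m - 1 rotates the m
   base-q digits, and complementation commutes with rotation, so x is a coset
   leader iff y is the largest of its rotations; since q^m - 1 is even, x and y
   have the same parity. Large odd leaders thus correspond to small odd
   rotation-maximal y: the smallest is q^(m-1), and the next is
   q^(m-1) + q^a + q^b with a = (2m-1)/3, b = (m-1)/3. Any odd rotation-maximal
   y strictly between them has leading digit 1 and further 1-digits at some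
   t > s (parity forces the third one). Maximality makes the run of zeros after
   the leading digit, of length m - 2 - t, no longer than the run between t and
   s, nor than the s positions below s; as these three add up to m - 3, this
   contradicts t <= a (ties are settled by comparing further digits). *)

(* [rot q m j y] rotates the m base-q digits of y to the left by j places. *)
Definition rot (q m j y : nat) : nat :=
  y %% q ^ (m - j) * q ^ j + y %/ q ^ (m - j).

Definition rot_maximal (q m y : nat) : Prop :=
  forall j, j <= m -> rot q m j y <= y.

Lemma rotate_mod_pred A B u v : u < A -> v < B -> u * B + v < B * A - 1 ->
  ((u * B + v) * A) %% (B * A - 1) = v * A + u.
Proof.
move=> u_lt v_lt x_lt.
have -> : (u * B + v) * A = u * (B * A - 1) + (v * A + u) by nia.
rewrite modnMDl modn_small //.
have [v_small|v_max] : v < B - 1 \/ v = B - 1 by lia.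
- nia.
- subst v; nia.
Qed.

Section Rotation.

Context {q m : nat}.
Hypothesis q_gt1 : 1 < q.

Local Notation n := (q ^ m - 1).

Lemma expq_gt0 e : 0 < q ^ e.
Proof. by rewrite expn_gt0 ltnW. Qed.

Lemma expq_leq_bound e t z : q ^ e <= z -> z < q ^ t.+1 -> e <= t.
Proof.
move=> ge lt; rewrite -ltnS -(ltn_exp2l _ _ q_gt1).
exact: leq_ltn_trans ge lt.
Qed.

Lemma expq_lead_decomp z : 0 < z ->
  exists t w, z = q ^ t + w /\ q ^ t + w < q ^ t.+1.
Proof.
move=> z_gt0; exists (trunc_log q z), (z - q ^ trunc_log q z).
by rewrite subnKC ?trunc_logP ?trunc_log_ltn.
Qed.

Lemma rot_split j hi lo : lo < q ^ (m - j) ->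
  rot q m j (hi * q ^ (m - j) + lo) = lo * q ^ j + hi.
Proof.
move=> lo_lt; rewrite /rot modnMDl modn_small // divnMDl ?expq_gt0 //.
by rewrite divn_small ?addn0.
Qed.

Lemma rot0 y : y < q ^ m -> rot q m 0 y = y.
Proof.
by move=> y_lt; rewrite /rot subn0 expn0 muln1 modn_small // divn_small ?addn0.
Qed.

Lemma rot_dvd j y : q ^ (m - j) %| y -> rot q m j y <= y.
Proof. by rewrite /dvdn => /eqP y_mod; rewrite /rot y_mod leq_div. Qed.

Lemma rot_mod j x : j <= m -> x < n -> (x * q ^ j) %% n = rot q m j x.
Proof.
move=> j_le; have -> : q ^ m = q ^ (m - j) * q ^ j by rewrite -expnD subnK.
rewrite /rot; set B := q ^ (m - j); set A := q ^ j => x_lt.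
have u_lt : x %/ B < A by rewrite ltn_divLR ?expq_gt0 // mulnC; lia.
have v_lt : x %% B < B by rewrite ltn_mod expq_gt0.
by rewrite {1}(divn_eq x B) rotate_mod_pred // -divn_eq.
Qed.

Lemma rot_compl j x : j <= m -> x <= n -> rot q m j (n - x) = n - rot q m j x.
Proof.
move=> j_le; have -> : q ^ m = q ^ (m - j) * q ^ j by rewrite -expnD subnK.
set B := q ^ (m - j); set A := q ^ j => x_le.
have u_lt : x %/ B < A by rewrite ltn_divLR ?expq_gt0 // mulnC; lia.
have v_lt : x %% B < B by rewrite ltn_mod expq_gt0.
rewrite (divn_eq x B) rot_split //.
rewrite (_ : B * A - 1 - _ = (A - 1 - x %/ B) * B + (B - 1 - x %% B)); last first.
  by nia.
rewrite rot_split; last by rewrite /B; lia.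
nia.
Qed.

Lemma expn_mod_cycle x j : (x * q ^ j) %% n = (x * q ^ (j %% m)) %% n.
Proof.
have qm1 : q ^ m = 1 %[mod n] by rewrite -{1}(subnK (expq_gt0 m)) modnDl.
rewrite {1}(divn_eq j m) expnD [_ * m]mulnC expnM mulnCA -modnMml -modnXm qm1.
by rewrite modnXm exp1n modnMml mul1n.
Qed.

Lemma coset_leaderE x : 0 < m -> x < n ->
  coset_leader q m x <-> rot_maximal q m (n - x).
Proof.
move=> m_gt0 x_lt; have x_le := ltnW x_lt.
split=> [[_ x_min] j j_le | x_max].
  by rewrite rot_compl // -rot_mod // leq_sub2l.
split=> // j; have j_le : j %% m <= m by rewrite ltnW ?ltn_mod.
have := x_max _ j_le.
rewrite expn_mod_cycle rot_compl // -rot_mod // (leq_sub2lE _ x_le).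
by apply.
Qed.

Lemma rot_maximal_top_digit y p hi lo : rot_maximal q m y -> p < m ->
  q ^ p + lo < q ^ p.+1 -> y = hi * q ^ p.+1 + (q ^ p + lo) ->
  q ^ (m - 1) + lo * q ^ (m - p.+1) + hi <= y.
Proof.
move=> y_max p_lt top_lt y_eq.
have e : m - (m - p.+1) = p.+1 by rewrite subKn.
have := rot_split (m - p.+1) hi (q ^ p + lo).
rewrite e -y_eq => /(_ top_lt) rot_y.
have := y_max _ (leq_subr p.+1 m); rewrite rot_y mulnDl -expnD.
by rewrite (_ : p + (m - p.+1) = m - 1) //; lia.
Qed.

Lemma rot_maximal_lead y : rot_maximal q m y -> 0 < y -> q ^ (m - 1) <= y.
Proof.
move=> y_max y_gt0; have [t [w [y_eq y_lt]]] := expq_lead_decomp _ y_gt0.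
have [m_le | t_lt] := leqP m t.
  rewrite y_eq; apply: leq_trans (leq_addr _ _); apply: leq_pexp2l; lia.
apply: leq_trans (rot_maximal_top_digit _ _ 0 _ y_max t_lt y_lt _).
  by rewrite -addnA leq_addr.
by rewrite y_eq.
Qed.

(* Bringing the 1-digit of y at position t, resp. s, to the front must not
   increase y; comparing the leading digits bounds the runs of zeros between
   the 1-digits at positions m - 1, t and s. *)
Lemma rot_maximal_gap1 y t s w : rot_maximal q m y -> t < m - 1 ->
  y = q ^ (m - 1) + (q ^ t + w) -> q ^ t + w < q ^ t.+1 -> q ^ s <= w ->
  s + (m - t.+1) <= t.
Proof.
move=> y_max t_lt y_eq top_lt w_ge.
have : q ^ (m - 1) + w * q ^ (m - t.+1) + q ^ (m - 2 - t) <= y.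
  apply: rot_maximal_top_digit _ _ _ _ y_max _ top_lt _; first by lia.
  by rewrite -expnD (_ : m - 2 - t + t.+1 = m - 1) //; lia.
rewrite y_eq -addnA leq_add2l => gap.
apply: expq_leq_bound _ _ _ (leq_ltn_trans gap top_lt).
rewrite expnD; apply: leq_trans (leq_addr _ _).
by rewrite leq_mul2r w_ge orbT.
Qed.

Lemma rot_maximal_gap2 y t s w : rot_maximal q m y -> s < t -> t < m - 1 ->
  y = q ^ (m - 1) + (q ^ t + (q ^ s + w)) -> q ^ s + w < q ^ s.+1 ->
  m - 2 - s <= t /\ (m - 2 - s = t -> t - s.+1 <= s).
Proof.
move=> y_max s_lt t_lt y_eq top_lt.
have : q ^ (m - 1) + w * q ^ (m - s.+1) + (q ^ (m - 2 - s) + q ^ (t - s.+1)) <= y.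
  apply: rot_maximal_top_digit _ _ _ _ y_max _ top_lt _; first by lia.
  rewrite y_eq mulnDl -!expnD !addnA.
  by congr (q ^ _ + q ^ _ + _ + _); lia.
rewrite y_eq -addnA leq_add2l => gap.
have z_lt : q ^ t + (q ^ s + w) < q ^ t.+1.
  have : q ^ s.+1 <= q ^ t := leq_pexp2l (ltnW q_gt1) s_lt.
  have : 2 * q ^ t <= q ^ t.+1 by rewrite expnS leq_mul2r q_gt1 orbT.
  move: top_lt; move: (q ^ t) (q ^ s) (q ^ s.+1) (q ^ t.+1) => T S S1 T1; lia.
have [w0 | w_gt0] := posnP w.
  rewrite w0 mul0n add0n addn0 in gap z_lt.
  have le_t : m - 2 - s <= t.
    exact: expq_leq_bound _ _ _ (leq_trans (leq_addr _ _) gap) z_lt.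
  split=> // e; move: gap; rewrite e leq_add2l leq_exp2l //.
have : m - s.+1 <= t.
  apply: expq_leq_bound _ _ _ (leq_trans (leq_trans _ (leq_addr _ _)) gap) z_lt.
  by rewrite leq_pmull.
lia.
Qed.

End Rotation.

Section Delta2.

Context {q m : nat}.
Hypothesis q_gt2 : 2 < q.

Let q_gt1 : 1 < q := ltnW q_gt2.
Local Notation n := (q ^ m - 1).
Local Notation a := ((2 * m - 1) %/ 3).
Local Notation b := ((m - 1) %/ 3).
Local Notation y2 := (q ^ (m - 1) + q ^ a + q ^ b).

Lemma expn_sum2_ltS i j : j <= i -> q ^ i + q ^ j < q ^ i.+1.
Proof.
move=> ji; have := leq_pexp2l (ltnW q_gt1) ji; have := expq_gt0 q_gt1 i.
by rewrite expnS; move: (q ^ i) (q ^ j) => X Y; nia.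
Qed.

Lemma expn_sum3_leS i j k : k <= j <= i -> q ^ i + q ^ j + q ^ k <= q ^ i.+1.
Proof.
move=> /andP[kj ji].
have := leq_pexp2l (ltnW q_gt1) ji; have := leq_pexp2l (ltnW q_gt1) kj.
by rewrite expnS; move: (q ^ i) (q ^ j) (q ^ k) => X Y Z; nia.
Qed.

Lemma leq_expn_sum3_lex i1 i2 i3 j1 j2 j3 : i3 <= i2 <= i1 ->
  (i1 < j1) || (i1 == j1) && ((i2 < j2) || (i2 == j2) && (i3 <= j3)) ->
  q ^ i1 + q ^ i2 + q ^ i3 <= q ^ j1 + q ^ j2 + q ^ j3.
Proof.
move=> i_desc /orP[i1_lt | /andP[/eqP<- /orP[i2_lt | /andP[/eqP<- i3_le]]]].
- apply: leq_trans (expn_sum3_leS _ _ _ i_desc) _; rewrite -addnA.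
  exact: leq_trans (leq_pexp2l (ltnW q_gt1) i1_lt) (leq_addr _ _).
- case/andP: i_desc => i32 _; rewrite -!addnA leq_add2l.
  apply: leq_trans (ltnW (expn_sum2_ltS _ _ i32)) _.
  exact: leq_trans (leq_pexp2l (ltnW q_gt1) i2_lt) (leq_addr _ _).
- by rewrite leq_add2l leq_pexp2l // ltnW.
Qed.

Lemma ltn_expn_sum2_lex t s w i j : j <= i ->
  q ^ t + (q ^ s + w) < q ^ i + q ^ j -> t <= i /\ (t = i -> s < j).
Proof.
move=> ji lt_ij; split.
  apply: expq_leq_bound q_gt1 _ _ _ _ (ltn_trans lt_ij (expn_sum2_ltS _ _ ji)).
  exact: leq_addr.
move=> ti; move: lt_ij; rewrite ti ltn_add2l => lt_j.
by rewrite -(ltn_exp2l _ _ q_gt1) (leq_ltn_trans (leq_addr _ _) lt_j).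
Qed.

(* The successor is needed for m = 2, where a = m - 1 and b = 0. *)
Lemma y2_tail_le : q ^ a + q ^ b <= (q ^ (m - 1)).+1.
Proof.
have [[-> ->] | a_lt] : a = m - 1 /\ b = 0 \/ a < m - 1 by lia.
  by rewrite expn0 addn1.
have b_le : b <= a by lia.
apply: leq_trans (ltnW (expn_sum2_ltS _ _ b_le)) (leq_trans _ (leqnSn _)).
exact: leq_pexp2l (ltnW q_gt1) a_lt.
Qed.

Lemma y2_lt : 1 < m -> y2 < q ^ m.
Proof.
move=> m_gt1; have : q ^ b < q ^ a by rewrite ltn_exp2l //; lia.
have : q ^ a <= q ^ (m - 1) by rewrite leq_pexp2l //; [exact: ltnW | lia].
rewrite -[in q ^ m](subnK (ltnW m_gt1)) addn1 expnS.
move: (q ^ (m - 1)) (q ^ a) (q ^ b) => X Y Z YX ZY.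
have : X + Y + Z < 3 * X by lia.
by move/leq_trans; apply; rewrite leq_mul2r q_gt2 orbT.
Qed.

Lemma rot_maximal_expq : 0 < m -> rot_maximal q m (q ^ (m - 1)).
Proof.
move=> m_gt0 [|j] j_le.
  by rewrite rot0 // ltn_exp2l //; lia.
by apply: rot_dvd; rewrite dvdn_exp2l //; lia.
Qed.

Lemma rot_maximal_y2 : 1 < m -> rot_maximal q m y2.
Proof.
move=> m_gt1 [|j] j_le; first by rewrite rot0 ?y2_lt.
have [j_lt_a | j_ge_a] := ltnP j (m - 1 - a).
  have y2_eq : y2 = q ^ j * q ^ (m - j.+1) + (q ^ a + q ^ b).
    by rewrite -expnD addnA (_ : j + _ = m - 1) //; lia.
  rewrite {1}y2_eq rot_split //; last first.
    apply: leq_trans (expn_sum2_ltS _ _ _) _; first by lia.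
    by rewrite leq_pexp2l //; lia.
  by rewrite mulnDl -!expnD; apply: leq_expn_sum3_lex; lia.
have [j_lt_b | j_ge_b] := ltnP j (m - 1 - b).
  have y2_eq : y2 = (q ^ j + q ^ (a + j.+1 - m)) * q ^ (m - j.+1) + q ^ b.
    by rewrite mulnDl -!expnD; congr (q ^ _ + q ^ _ + _); lia.
  rewrite {1}y2_eq rot_split //; last by rewrite ltn_exp2l //; lia.
  by rewrite -expnD addnA; apply: leq_expn_sum3_lex; lia.
by apply: rot_dvd; rewrite !dvdn_add // dvdn_exp2l //; lia.
Qed.

Lemma delta2E : 0 < m -> (q - 1) * q ^ (m - 1) - q ^ a - q ^ b - 1 = n - y2.
Proof.
move=> m_gt0; rewrite -[in q ^ m](subnK m_gt0) addn1 expnS mulnBl mul1n.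
by move: (q * q ^ (m - 1)) (q ^ (m - 1)) (q ^ a) (q ^ b) => QX X A B; lia.
Qed.

Section OddLeaders.

Hypothesis q_odd : odd q.

Lemma odd_expq e : odd (q ^ e).
Proof. by rewrite oddX q_odd orbT. Qed.

Lemma odd_rot_maximal_lt_y2 y : 1 < m -> odd y -> rot_maximal q m y ->
  0 < y -> y < y2 -> y = q ^ (m - 1).
Proof.
move=> m_gt1 y_odd y_max y_gt0 y_lt.
have [z y_eq] : exists z, y = q ^ (m - 1) + z.
  by exists (y - q ^ (m - 1)); rewrite subnKC // (rot_maximal_lead q_gt1 _ y_max).
have z_even : ~~ odd z by move: y_odd; rewrite y_eq oddD odd_expq; case: (odd z).
have z_lt_ab : z < q ^ a + q ^ b by move: y_lt; rewrite y_eq -addnA ltn_add2l.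
have [z0|z_gt0] := posnP z; first by rewrite y_eq z0 addn0.
have z_lt : z < q ^ (m - 1).
  have z_le : z <= q ^ (m - 1) by rewrite -ltnS (leq_trans z_lt_ab y2_tail_le).
  rewrite ltn_neqAle z_le andbT.
  by apply: contra z_even => /eqP->; rewrite odd_expq.
have [t [w [z_eq z_lt_t]]] := expq_lead_decomp q_gt1 _ z_gt0.
have z_ge : q ^ t <= z by rewrite z_eq leq_addr.
have t_lt : t < m - 1 by rewrite -(ltn_exp2l _ _ q_gt1) (leq_ltn_trans z_ge z_lt).
have w_gt0 : 0 < w.
  by move: z_even; rewrite z_eq oddD odd_expq; case: (w).
have [s [w' [w_eq w_lt_s]]] := expq_lead_decomp q_gt1 _ w_gt0.
rewrite w_eq in z_eq z_lt_t; rewrite z_eq in y_eq z_lt_ab.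
have gap1 := rot_maximal_gap1 q_gt1 _ _ _ _ y_max t_lt y_eq z_lt_t (leq_addr _ _).
have s_lt : s < t by lia.
have [gap2 gap2_eq] := rot_maximal_gap2 q_gt1 _ _ _ _ y_max s_lt t_lt y_eq w_lt_s.
have b_le : b <= a by lia.
have [t_le_a s_lt_b] := ltn_expn_sum2_lex _ _ _ _ _ b_le z_lt_ab.
exfalso; clear -m_gt1 gap1 s_lt gap2 gap2_eq t_le_a s_lt_b; lia.
Qed.

Lemma odd_coset_leader_compl y : 0 < m -> 0 < y -> y < q ^ m ->
  odd_coset_leader q m (n - y) <-> odd y /\ rot_maximal q m y.
Proof.
move=> m_gt0 y_gt0 y_lt.
have y_le : y <= n by rewrite -ltnS subn1 prednK ?expq_gt0.
have n_even : odd n = false by rewrite oddB ?expq_gt0 // odd_expq.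
have x_lt : n - y < n by rewrite ltn_subrL y_gt0 (leq_trans y_gt0 y_le).
by rewrite /odd_coset_leader coset_leaderE // subKn // oddB // n_even.
Qed.

End OddLeaders.

End Delta2.

Theorem lemma18 (q m : nat) :
  prime_power q -> odd q -> 3 <= q -> 2 <= m ->
  second_largest_odd_coset_leader q m
    ((q - 1) * q ^ (m - 1) - q ^ ((2 * m - 1) %/ 3) - q ^ ((m - 1) %/ 3) - 1).
Proof.
move=> _ q_odd q_gt2 m_gt1; have q_gt1 := ltnW q_gt2; have m_gt0 := ltnW m_gt1.
rewrite (delta2E q_gt2 m_gt0); set y2 := _ + q ^ _.
have y2_lt : y2 < q ^ m := y2_lt q_gt2 m_gt1.
have y2_gt : q ^ (m - 1) < y2.
  by rewrite /y2 -addnA -{1}[q ^ (m - 1)]addn0 ltn_add2l addn_gt0 expq_gt0.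
have y2_le : y2 <= q ^ m - 1 by rewrite -ltnS subn1 prednK ?expq_gt0.
have compl y := odd_coset_leader_compl q_gt2 q_odd y m_gt0.
split.
  apply/compl; rewrite ?(ltn_trans (expq_gt0 q_gt1 _) y2_gt) //.
  by split; [rewrite !oddD !odd_expq | exact: rot_maximal_y2].
exists (q ^ m - 1 - q ^ (m - 1)); split; [|split].
- exact: ltn_sub2l (leq_trans y2_gt y2_le) y2_gt.
- apply/compl; rewrite ?expq_gt0 ?(ltn_trans y2_gt) //.
  by split; [exact: odd_expq | exact: rot_maximal_expq].
- move=> x x_leader x_gt; have x_lt : x < q ^ m - 1 by case: x_leader => _ [].
  have x_eq : x = q ^ m - 1 - (q ^ m - 1 - x) by rewrite subKn // ltnW.
  have y_gt0 : 0 < q ^ m - 1 - x by rewrite subn_gt0.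
  have y_lt : q ^ m - 1 - x < q ^ m.
    by rewrite (leq_ltn_trans (leq_subr _ _)) // ltn_subrL expq_gt0.
  rewrite x_eq in x_leader *; congr (_ - _).
  case/(compl _ y_gt0 y_lt): x_leader => y_odd y_max.
  apply: odd_rot_maximal_lt_y2 => //.
  by rewrite ltn_subLR ?(ltnW x_lt) // addnC -ltn_subLR.
Qed.
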